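(* Let $d\geq 3$ and let $G$ be a graph on $n$ vertices that is not $M$-independent in $\mathbb{R}^{d-2}$. For $i=1,\dots,d$ let $k_i$ denote the dimension of the space of infinitesimal motions of a generic realization of $G$ in $\mathbb{C}^i$. Then $k_i\geq 2k_{i+1}-k_{i+2}+1$ for $i=1,\dots,d-2$.
   Context: For $p:V\to\mathbb{C}^i$, the rigidity matrix $R(G,p)$ is the $|E|\times i|V|$ matrix whose row for edge $uv$ has $p(u)-p(v)$ in the columns of $u$, $p(v)-p(u)$ in the columns of $v$, zeros elsewhere; the infinitesimal motions are the elements of $\ker R(G,p)$. A realization is generic if its coordinates are algebraically independent over $\mathbb{Q}$ (the dimension $k_i$ is the same for all generic realizations). $G$ is $M$-independent in $\mathbb{R}^k$ if the rows of $R(G,p)$ are linearly independent for a generic $p:V\to\mathbb{R}^k$. *)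

From HB Require Import structures.
From mathcomp Require Import all_boot all_order all_algebra.
From mathcomp Require Import mpoly.
From mathcomp Require Import reals.
From mathcomp Require Import complex.
Set Implicit Arguments. Unset Strict Implicit. Unset Printing Implicit Defensive.
Import Order.TTheory GRing.Theory Num.Theory.
Local Open Scope ring_scope.

Definition simple_graph (n : nat) (adj : rel 'I_n) : Prop :=
  ssrbool.symmetric adj /\ irreflexive adj.

(* Edges of the graph: unordered pairs {u,v}, represented by the ordered pair
   (u,v) with u < v. *)
Definition edge_type (n : nat) (adj : rel 'I_n) : predArgType :=
  {uv : 'I_n * 'I_n | (uv.1 < uv.2)%N && adj uv.1 uv.2}.

(* A realization p : V -> F^i is an n x i matrix (row v = p(v)). *)

Definition rigidity_row (F : ringType) (n i : nat) (p : 'M[F]_(n, i))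
    (u v : 'I_n) : 'M[F]_(n, i) :=
  \matrix_(w < n, j < i)
     ((w == u)%:R * (p u j - p v j) + (w == v)%:R * (p v j - p u j)).

Definition rigidity_matrix (F : ringType) (n : nat) (adj : rel 'I_n) (i : nat)
    (p : 'M[F]_(n, i)) : 'M[F]_(#|edge_type adj|, n * i) :=
  \matrix_(r < #|edge_type adj|)
     mxvec (rigidity_row p (val (enum_val r)).1 (val (enum_val r)).2).

(* Dimension of the space of infinitesimal motions: ker R(G,p) = the set of
   column vectors x with R x = 0, i.e. the row kernel of R^T. *)
Definition inf_motions_dim (F : fieldType) (n : nat) (adj : rel 'I_n) (i : nat)
    (p : 'M[F]_(n, i)) : nat :=
  \rank (kermx (rigidity_matrix adj p)^T).

(* Generic realization: the coordinates are algebraically independent over Q,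
   i.e. no nonzero rational polynomial in the n*i coordinates vanishes on them. *)
Definition generic (F : fieldType) (n i : nat) (p : 'M[F]_(n, i)) : Prop :=
  forall P : {mpoly rat[n * i]}, P != 0 ->
    (map_mpoly (ratr : rat -> F) P).@[fun k => mxvec p 0 k] != 0.

Definition M_independent (R : realType) (n : nat) (adj : rel 'I_n) (k : nat) : Prop :=
  forall p : 'M[R]_(n, k), generic p -> row_free (rigidity_matrix adj p).

From HB Require Import structures.
From mathcomp Require Import all_boot all_order all_algebra.
From mathcomp Require Import mpoly reals complex.
From mathcomp Require Import ring zify.

(* With r_i the rank of the rigidity matrix of a generic realization in
   dimension i, k_i = n i - r_i, so the claim is r_i + r_(i+2) + 1 <= 2 r_(i+1).
   Take p generic in dimension i+2 and let a, pb, pc be p restricted to the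
   first i coordinates, to all but the last one, and to all but the
   (i+1)-st.  Every column of R(p) is a column of R(pb) or of R(pc), and both
   column spaces contain that of R(a) together with the edge vector
   v_uv = (p_b(u) - p_b(v)) (p_c(u) - p_c(v)).  Since G is dependent in
   dimension d-2 >= i, R(a) has a nonzero self-stress, which forces v outside
   the column space of R(a); the dimension formula for the sum and
   intersection of the two column spaces then gives the inequality.  Ranks
   of generic realizations dominate ranks of all specializations, which
   compares the generic ranks across dimensions and fields. *)

Set Implicit Arguments.
Unset Strict Implicit.
Unset Printing Implicit Defensive.
Import GRing.Theory.
Local Open Scope ring_scope.

Section UnitMinor.
Variables (F : fieldType) (m n : nat).

Lemma unit_minor_le_rank r (A : 'M[F]_(m, n)) (f : 'I_r -> 'I_m) (g : 'I_r -> 'I_n) :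
  mxsub f g A \in unitmx -> (r <= \rank A)%N.
Proof.
move=> /mxrank_unit <-.
have -> : mxsub f g A = rowsub f A *m colsub g 1%:M.
  by rewrite mulmx_colsub mulmx1; apply/matrixP => i j; rewrite !mxE.
exact: leq_trans (mxrankM_maxl _ _) (mxrankS (rowsub_sub _ _)).
Qed.

Lemma exists_unit_minor (A : 'M[F]_(m, n)) :
  exists f : 'I_(\rank A) -> 'I_m, exists g : 'I_(\rank A) -> 'I_n,
    mxsub f g A \in unitmx.
Proof.
set f := maxrankfun A; set B := (rowsub f A)^T.
have rank_B : \rank B = \rank A by rewrite mxrank_tr; apply/eqP; exact: maxrowsub_free.
exists f, (maxrankfun B \o cast_ord (esym rank_B)).
have -> : mxsub f (maxrankfun B \o cast_ord (esym rank_B)) A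
          = (rowsub (maxrankfun B \o cast_ord (esym rank_B)) B)^T.
  by apply/matrixP => i j; rewrite !mxE.
by rewrite unitmx_tr rowsub_comp rowsub_cast -row_free_unit row_free_castmx maxrowsub_free.
Qed.

End UnitMinor.

Definition rat_meval (F : numFieldType) (N : nat) (x : 'I_N -> F) :
  {rmorphism {mpoly rat[N]} -> F} := meval x \o map_mpoly (ratr : rat -> F).

(* The determinant of an invertible minor at x is a nonzero polynomial, so it
   does not vanish at y. *)
Lemma mxrank_rat_meval_le (F K : numFieldType) N m1 m2
    (M : 'M[{mpoly rat[N]}]_(m1, m2)) (x : 'I_N -> F) (y : 'I_N -> K) :
  (forall P, P != 0 -> rat_meval y P != 0) ->
  (\rank (map_mx (rat_meval x) M) <= \rank (map_mx (rat_meval y) M))%N.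
Proof.
move=> y_generic; have [f [g]] := exists_unit_minor (map_mx (rat_meval x) M).
rewrite -map_mxsub => minor_x; apply: (unit_minor_le_rank (f := f) (g := g)).
move: minor_x; rewrite -map_mxsub !unitmxE !det_map_mx !unitfE => det_x_neq0.
by apply: y_generic; apply: contraNneq det_x_neq0 => ->; rewrite rmorph0.
Qed.

Section Rigidity.
Variables (n : nat) (adj : rel 'I_n).
Local Notation E := #|edge_type adj|.
Local Notation src r := (val (enum_val r)).1.
Local Notation dst r := (val (enum_val r)).2.
Local Notation rigidity := (rigidity_matrix adj).

Lemma src_lt_dst (r : 'I_E) : (src r < dst r)%N.
Proof. by case/andP: (valP (enum_val r)). Qed.

Lemma src_neq_dst (r : 'I_E) : src r != dst r.
Proof. by rewrite neq_ltn src_lt_dst. Qed.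

Lemma edge_inj (r r' : 'I_E) : src r = src r' -> dst r = dst r' -> r = r'.
Proof.
move=> eq_src eq_dst; apply/enum_val_inj/val_inj.
by rewrite [LHS]surjective_pairing [RHS]surjective_pairing eq_src eq_dst.
Qed.

Definition coords (F : Type) k (q : 'M[F]_(n, k)) : 'I_(n * k) -> F :=
  fun t => mxvec q 0 t.

Definition symbolic_mx k : 'M[{mpoly rat[n * k]}]_(n, k) :=
  \matrix_(w, j) 'X_(mxvec_index w j).

Lemma map_symbolic_mx (F : numFieldType) k (q : 'M[F]_(n, k)) :
  map_mx (rat_meval (coords q)) (symbolic_mx k) = q.
Proof. by apply/matrixP => w j; rewrite !mxE /= map_mpolyX mevalXU /coords mxvecE. Qed.

Lemma map_rigidity_matrix (R S : nzRingType) (f : {rmorphism R -> S}) k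
    (q : 'M[R]_(n, k)) :
  map_mx f (rigidity q) = rigidity (map_mx f q).
Proof.
apply/matrixP => r c; rewrite !mxE; case: (mxvec_indexP c) => w j.
by rewrite !mxvecE !mxE rmorphD !rmorphM !rmorphB !rmorph_nat ?mxE.
Qed.

Definition rigidity_col (F : nzRingType) k (q : 'M[F]_(n, k)) w j : 'rV[F]_E :=
  \row_r ((w == src r)%:R * (q (src r) j - q (dst r) j)
        + (w == dst r)%:R * (q (dst r) j - q (src r) j)).

Lemma row_rigidity_tr (F : nzRingType) k (q : 'M[F]_(n, k)) w j :
  row (mxvec_index w j) (rigidity q)^T = rigidity_col q w j.
Proof. by apply/rowP => r; rewrite !mxE mxvecE mxE. Qed.

Lemma rigidity_col_colsub (F : nzRingType) k k' (h : 'I_k -> 'I_k')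
    (q : 'M[F]_(n, k')) w j :
  rigidity_col (colsub h q) w j = rigidity_col q w (h j).
Proof. by apply/rowP => r; rewrite !mxE. Qed.

Lemma rigidity_col_sub (F : fieldType) k (q : 'M[F]_(n, k)) w j :
  (rigidity_col q w j <= (rigidity q)^T)%MS.
Proof. by rewrite -row_rigidity_tr row_sub. Qed.

Lemma rigidity_tr_sub_cols (F : fieldType) k k' (q : 'M[F]_(n, k))
    (q' : 'M[F]_(n, k')) (h : 'I_k -> 'I_k') :
  (forall w j, q w j = q' w (h j)) -> ((rigidity q)^T <= (rigidity q')^T)%MS.
Proof.
move=> q_cols; apply/row_subP => c; case: (mxvec_indexP c) => w j.
have -> : q = colsub h q' by apply/matrixP => w' j'; rewrite mxE q_cols.
by rewrite row_rigidity_tr rigidity_col_colsub rigidity_col_sub.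
Qed.

Lemma sum_rigidity_col (F : comNzRingType) k (q : 'M[F]_(n, k)) j (y : 'I_n -> F) :
  \sum_w y w *: rigidity_col q w j
  = \row_r ((y (src r) - y (dst r)) * (q (src r) j - q (dst r) j)).
Proof.
apply/rowP => r; rewrite summxE mxE; under eq_bigr do rewrite !mxE.
rewrite (bigD1 (src r)) // (bigD1 (dst r)) /=; last by rewrite eq_sym src_neq_dst.
rewrite big1 => [|w /andP[/negbTE-> /negbTE->]]; last by rewrite !mul0r addr0 mulr0.
rewrite !eqxx (negbTE (src_neq_dst r)) eq_sym (negbTE (src_neq_dst r)).
by rewrite !mul0r !mul1r addr0 add0r; ring.
Qed.

Lemma rank_rigidity_le_generic_colsub (F K : numFieldType) k k' (q : 'M[F]_(n, k))
    (p : 'M[K]_(n, k')) (h : 'I_k -> 'I_k') :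
  injective h -> generic p ->
  (\rank (rigidity q) <= \rank (rigidity (colsub h p)))%N.
Proof.
move=> h_inj gen_p.
pose q' : 'M[F]_(n, k') := \matrix_(w, j') \sum_(j | h j == j') q w j.
have q'_h : colsub h q' = q.
  by apply/matrixP => w j; rewrite !mxE (big_pred1 j) // => j0; exact: inj_eq.
have := @mxrank_rat_meval_le F K _ _ _
  (rigidity (colsub h (symbolic_mx k'))) (coords q') (coords p) gen_p.
by rewrite !map_rigidity_matrix !map_mxsub !map_symbolic_mx q'_h.
Qed.

Lemma rank_rigidity_le_generic (F K : numFieldType) k (q : 'M[F]_(n, k))
    (p : 'M[K]_(n, k)) :
  generic p -> (\rank (rigidity q) <= \rank (rigidity p))%N.
Proof.
move=> gen_p; have := rank_rigidity_le_generic_colsub q (h := id) (fun _ _ => id) gen_p.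
by rewrite mxsub_id.
Qed.

Lemma rank_rigidity_le_generic_widen (F K : numFieldType) k k' (q : 'M[F]_(n, k))
    (p : 'M[K]_(n, k')) :
  (k <= k')%N -> generic p -> (\rank (rigidity q) <= \rank (rigidity p))%N.
Proof.
move=> le_kk' gen_p.
have sub_p : ((rigidity (colsub (widen_ord le_kk') p))^T <= (rigidity p)^T)%MS.
  by apply: (rigidity_tr_sub_cols (h := widen_ord le_kk')) => w j; rewrite mxE.
have widen_inj : injective (widen_ord le_kk') by move=> i j /(congr1 val) /= /val_inj.
apply: leq_trans (rank_rigidity_le_generic_colsub q widen_inj gen_p) _.
by rewrite -mxrank_tr -[X in (_ <= X)%N]mxrank_tr mxrankS.
Qed.

Definition edge_product_row (F : nzRingType) k (q : 'M[F]_(n, k)) jb jc : 'rV[F]_E :=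
  \row_r ((q (src r) jb - q (dst r) jb) * (q (src r) jc - q (dst r) jc)).

Lemma map_edge_product_row (R S : nzRingType) (f : {rmorphism R -> S}) k
    (q : 'M[R]_(n, k)) jb jc :
  map_mx f (edge_product_row q jb jc) = edge_product_row (map_mx f q) jb jc.
Proof. by apply/rowP => r; rewrite !mxE rmorphM !rmorphB. Qed.

Lemma edge_product_rowC (F : comNzRingType) k (q : 'M[F]_(n, k)) jb jc :
  edge_product_row q jb jc = edge_product_row q jc jb.
Proof. by apply/rowP => r; rewrite !mxE mulrC. Qed.

Lemma edge_product_row_sub (F : fieldType) k k' (q : 'M[F]_(n, k))
    (q' : 'M[F]_(n, k')) jb jc j' :
  (forall w, q' w j' = q w jc) -> (edge_product_row q jb jc <= (rigidity q')^T)%MS.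
Proof.
move=> q'_col; have -> : edge_product_row q jb jc = \sum_w q w jb *: rigidity_col q' w j'.
  by rewrite sum_rigidity_col; apply/rowP => r; rewrite !mxE !q'_col.
by apply: summx_sub => w _; rewrite scalemx_sub ?rigidity_col_sub.
Qed.

Lemma edge_product_row_indicators (F : nzRingType) k (q : 'M[F]_(n, k)) jb jc
    (r0 : 'I_E) :
  (forall w, q w jb = (w == src r0)%:R) -> (forall w, q w jc = (w == dst r0)%:R) ->
  edge_product_row q jb jc = - delta_mx 0 r0.
Proof.
move=> q_jb q_jc; apply/rowP => r; rewrite !mxE !q_jb !q_jc.
have [->|r_neq] := eqVneq r r0.
  rewrite !eqxx (negbTE (src_neq_dst r0)) eq_sym (negbTE (src_neq_dst r0)) /=.
  by rewrite subr0 sub0r mul1r.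
rewrite eqxx /= mulr0n oppr0.
have [src_eq|src_neq] := eqVneq (src r) (src r0).
  have dst_neq : dst r != dst r0 by apply: contra_neq r_neq; exact: edge_inj.
  by rewrite src_eq (negbTE (src_neq_dst r0)) (negbTE dst_neq) subrr mulr0.
have [dst_eq|dst_neq] := eqVneq (dst r) (src r0).
  have src_neq' : src r != dst r0.
    by rewrite neq_ltn (ltn_trans (src_lt_dst r)) // dst_eq src_lt_dst.
  by rewrite dst_eq (negbTE (src_neq_dst r0)) (negbTE src_neq') subrr mulr0.
by rewrite subrr mul0r.
Qed.

(* A self-stress z of [colsub h p] with z_r0 <> 0 annihilates the column space
   of its rigidity matrix.  Specializing coordinates jb, jc of p to the
   indicators of the endpoints of r0 turns the edge product row into -e_r0,
   which z does not annihilate; the rank jump this witnesses at the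
   specialization also occurs at the generic point p. *)
Lemma edge_product_row_notin (F : numFieldType) k m (p : 'M[F]_(n, k))
    (h : 'I_m -> 'I_k) jb jc :
  generic p -> jb != jc -> (forall j, h j != jb) -> (forall j, h j != jc) ->
  ~~ row_free (rigidity (colsub h p)) ->
  ~~ (edge_product_row p jb jc <= (rigidity (colsub h p))^T)%MS.
Proof.
move=> gen_p jb_neq_jc h_neq_jb h_neq_jc dep.
set A := (rigidity (colsub h p))^T.
have [z /sub_kermxP stress_z z_neq0] :
    exists2 z : 'rV_E, (z <= kermx (rigidity (colsub h p)))%MS & z != 0.
  by apply/rowV0Pn; rewrite kermx_eq0.
have [r0 z_r0] : exists r0, z 0 r0 != 0.
  by case/matrix0Pn: z_neq0 => i [r0]; rewrite (ord1 i); exists r0.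
pose X : 'M[F]_(n, k) := \matrix_(w, j)
  if j == jb then (w == src r0)%:R else if j == jc then (w == dst r0)%:R else p w j.
have X_h : colsub h X = colsub h p.
  by apply/matrixP => w j; rewrite !mxE (negbTE (h_neq_jb j)) (negbTE (h_neq_jc j)).
have X_jb w : X w jb = (w == src r0)%:R by rewrite mxE eqxx.
have X_jc w : X w jc = (w == dst r0)%:R by rewrite mxE eq_sym (negbTE jb_neq_jc) eqxx.
have vX_notin : ~~ (edge_product_row X jb jc <= A)%MS.
  rewrite (edge_product_row_indicators X_jb X_jc); apply/negP => /submxP[y vX].
  have : (- delta_mx 0 r0 : 'rV_E) *m z^T = 0.
    by rewrite vX -mulmxA -trmx_mul stress_z trmx0 mulmx0.
  rewrite mulNmx -rowE => /matrixP/(_ 0 0); rewrite !mxE => /eqP.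
  by rewrite oppr_eq0 (negbTE z_r0).
have := @mxrank_rat_meval_le F F _ _ _
  (col_mx (rigidity (colsub h (symbolic_mx k)))^T (edge_product_row (symbolic_mx k) jb jc))
  (coords X) (coords p) gen_p.
rewrite !map_col_mx -!map_trmx !map_rigidity_matrix !map_mxsub !map_edge_product_row.
rewrite !map_symbolic_mx X_h -/A -!addsmxE; apply: contraTN => vp_in.
rewrite (addsmx_idPl vp_in) -ltnNge; apply: rank_ltmx.
by rewrite ltmxE addsmxSl addsmx_sub submx_refl.
Qed.

(* Coordinates b = m and c = m + 1: [lift ord_max] drops c,
   [lift (lift ord_max ord_max)] drops b, and [lift ord_max \o lift ord_max]
   drops both. *)
Lemma rank_rigidity_strict_submodular (F : numFieldType) m (p : 'M[F]_(n, m.+2)) :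
  generic p -> ~~ row_free (rigidity (colsub (lift ord_max \o lift ord_max) p)) ->
  (\rank (rigidity p) + \rank (rigidity (colsub (lift ord_max \o lift ord_max) p)) + 1
   <= \rank (rigidity (colsub (lift ord_max) p))
      + \rank (rigidity (colsub (lift (lift ord_max ord_max)) p)))%N.
Proof.
move=> gen_p dep.
set a := colsub _ p in dep *; set jb := lift ord_max ord_max.
set pb := colsub (lift ord_max) p; set pc := colsub (lift jb) p.
have jc_jb : lift jb ord_max = ord_max.
  by apply: val_inj; rewrite /= /bump ltnn leqnn.
have a_pb : ((rigidity a)^T <= (rigidity pb)^T)%MS.
  by apply: (rigidity_tr_sub_cols (h := lift ord_max)) => w j; rewrite !mxE.
have a_pc : ((rigidity a)^T <= (rigidity pc)^T)%MS.
  apply: (rigidity_tr_sub_cols (h := lift ord_max)) => w j; rewrite !mxE.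
  congr (p w _); apply: ord_inj; rewrite !lift_max [RHS]/= /bump /jb.
  by rewrite ltnn add0n [(m <= j)%N]leqNgt ltn_ord !add0n leqNgt ltn_ord.
have p_sub : ((rigidity p)^T <= (rigidity pb)^T + (rigidity pc)^T)%MS.
  apply/row_subP => c; case: (mxvec_indexP c) => w j; rewrite row_rigidity_tr.
  case: (unliftP ord_max j) => [j'|] ->.
    by rewrite -rigidity_col_colsub (submx_trans (rigidity_col_sub _ _ _)) ?addsmxSl.
  by rewrite -jc_jb -rigidity_col_colsub (submx_trans (rigidity_col_sub _ _ _)) ?addsmxSr.
set v := edge_product_row p jb ord_max.
have v_pb : (v <= (rigidity pb)^T)%MS.
  by rewrite /v edge_product_rowC (edge_product_row_sub _ (j' := ord_max)) // => w; rewrite mxE.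
have v_pc : (v <= (rigidity pc)^T)%MS.
  by rewrite (edge_product_row_sub _ (j' := ord_max)) // => w; rewrite mxE jc_jb.
have v_notin : ~~ (v <= (rigidity a)^T)%MS.
  apply: edge_product_row_notin => // [|j|j].
  - by rewrite eq_sym neq_lift.
  - by rewrite (inj_eq (@lift_inj _ _)) eq_sym neq_lift.
  - by rewrite eq_sym neq_lift.
have a_v_cap : ((rigidity a)^T + v <= (rigidity pb)^T :&: (rigidity pc)^T)%MS.
  by rewrite sub_capmx !addsmx_sub a_pb a_pc v_pb v_pc.
have rank_a_v : (\rank (rigidity a)^T < \rank ((rigidity a)^T + v))%N.
  by apply: rank_ltmx; rewrite ltmxE addsmxSl addsmx_sub submx_refl.
have := mxrank_sum_cap (rigidity pb)^T (rigidity pc)^T.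
move: (mxrankS p_sub) (mxrankS a_v_cap) rank_a_v; rewrite !mxrank_tr; lia.
Qed.

Lemma rank_rigidity_strict_concave (F K : numFieldType) k m (q : 'M[F]_(n, k))
    (p0 : 'M[K]_(n, m)) (p1 : 'M[K]_(n, m.+1)) (p2 : 'M[K]_(n, m.+2)) :
  (m <= k)%N -> generic q -> ~~ row_free (rigidity q) -> generic p1 -> generic p2 ->
  (\rank (rigidity p0) + \rank (rigidity p2) + 1 <= 2 * \rank (rigidity p1))%N.
Proof.
move=> le_mk gen_q dep_q gen_p1 gen_p2.
have lift2_inj : injective (lift ord_max \o lift (@ord_max m)).
  exact: inj_comp (@lift_inj _ _) (@lift_inj _ _).
have dep_a : ~~ row_free (rigidity (colsub (lift ord_max \o lift ord_max) p2)).
  apply: contra dep_q; rewrite /row_free !eqn_leq !rank_leq_row /= => /leq_trans; apply.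
  exact: rank_rigidity_le_generic_widen.
have le_p0 := rank_rigidity_le_generic_colsub p0 lift2_inj gen_p2.
have le_pb := rank_rigidity_le_generic (colsub (lift ord_max) p2) gen_p1.
have le_pc := rank_rigidity_le_generic (colsub (lift (lift ord_max ord_max)) p2) gen_p1.
rewrite mul2n -addnn; apply: leq_trans (leq_add le_pb le_pc).
apply: leq_trans (rank_rigidity_strict_submodular gen_p2 dep_a).
by rewrite leq_add2r addnC leq_add2l.
Qed.

Lemma inf_motions_dim_add_rank (F : fieldType) k (q : 'M[F]_(n, k)) :
  (inf_motions_dim adj q + \rank (rigidity q))%N = (n * k)%N.
Proof. by rewrite /inf_motions_dim mxrank_ker mxrank_tr subnK ?rank_leq_col. Qed.

Lemma inf_motions_dim_strict_convex (F K : numFieldType) k m (q : 'M[F]_(n, k))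
    (p0 : 'M[K]_(n, m)) (p1 : 'M[K]_(n, m.+1)) (p2 : 'M[K]_(n, m.+2)) :
  (m <= k)%N -> generic q -> ~~ row_free (rigidity q) -> generic p1 -> generic p2 ->
  ((inf_motions_dim adj p0)%:Z >=
     2 * (inf_motions_dim adj p1)%:Z - (inf_motions_dim adj p2)%:Z + 1)%R.
Proof.
move=> le_mk gen_q dep_q gen_p1 gen_p2.
have := rank_rigidity_strict_concave p0 le_mk gen_q dep_q gen_p1 gen_p2.
have := inf_motions_dim_add_rank p0; have := inf_motions_dim_add_rank p1.
have := inf_motions_dim_add_rank p2; have := mulnS n m; have := mulnS n m.+1.
(* The ranks occur under two convertible ring instances; [set] merges them. *)
set r0 := \rank (rigidity p0); set r1 := \rank (rigidity p1); set r2 := \rank (rigidity p2).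
lia.
Qed.

End Rigidity.

Unset Implicit Arguments.
Set Strict Implicit.

Theorem lemma3p10 (R : realType) (d n : nat) (adj : rel 'I_n) :
  (3 <= d)%N ->
  simple_graph adj ->
  ~ M_independent R adj (d - 2) ->
  forall (p : forall i : nat, 'M[R[i]]_(n, i)),
    (forall i : nat, (1 <= i <= d)%N -> generic (p i)) ->
    forall i : nat, (1 <= i <= d - 2)%N ->
      ((inf_motions_dim adj (p i))%:Z >=
        2 * (inf_motions_dim adj (p i.+1))%:Z
          - (inf_motions_dim adj (p i.+2))%:Z + 1)%R.
Proof.
move=> _ _ not_indep p gen_p i /andP[i_ge1 i_le].
apply/negPn/negP => ineq_fails; apply: not_indep => q gen_q.
apply/negPn/negP => dep_q; move/negP: ineq_fails; apply.
by apply: (inf_motions_dim_strict_convex (p i) i_le gen_q dep_q); apply: gen_p; lia.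
Qed.
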